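(* Let $G=(V,E)$ be a network with two sources $s_1,s_2$ and $n$ terminals $t_1,\dots,t_n$, such that for every $i\in\{1,2\}$ and $j\in\{1,\dots,n\}$ the max-flow from $s_i$ to $t_j$ is at least $1$ (i.e., there is a directed path from $s_i$ to $t_j$). Then there exists a linear network code (an assignment of coding vectors to all edges) over $\mathbb{F}=GF(2^m)$ such that every terminal $t_j$ can recover $X_1+X_2$ from the symbols on its incoming edges.
   Context: A network is a finite directed acyclic graph $G=(V,E)$ (parallel edges allowed) in which every edge has unit capacity and carries one symbol of a finite field $\mathbb{F}$ per use. Sources are vertices with no incoming edges; source $s_i$ holds $X_i\in\mathbb{F}$, the $X_i$ independent and uniformly distributed (unit entropy). Terminals are vertices with no outgoing edges. In a linear network code the symbol on an edge leaving a non-source vertex is an $\mathbb{F}$-linear combination of the symbols on the edges entering its tail, and the symbol on an edge leaving a source is a multiple of the source symbol. *)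

From HB Require Import structures.
From mathcomp Require Import all_boot all_order all_algebra all_field.
Set Implicit Arguments. Unset Strict Implicit. Unset Printing Implicit Defensive.
Import GRing.Theory.
Local Open Scope ring_scope.

(* A network: vertex type V, edge type E (parallel edges allowed),
   each edge e goes from [tl e] to [hd e]. *)
Section Network.
Variables (V E : finType) (tl hd : E -> V).

Fixpoint is_walk (u v : V) (p : seq E) : bool :=
  match p with
  | [::] => u == v
  | e :: p' => (tl e == u) && is_walk (hd e) v p'
  end.

Definition acyclic : Prop := forall (v : V) (p : seq E), is_walk v v p -> p = [::].

Definition reachable (u v : V) : Prop := exists p : seq E, is_walk u v p.

Definition is_source (v : V) : Prop := forall e : E, hd e != v.
Definition is_sink (v : V) : Prop := forall e : E, tl e != v.

(* Linear network code for two sources s1 s2, given by global coding vectors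
   c e in F^2 (row vectors; coordinate 0 = coefficient of X1, 1 = of X2),
   whose local encoding is linear:
   - an edge leaving s_i carries a multiple of X_i;
   - an edge leaving a non-source vertex carries an F-linear combination of
     the symbols on the edges entering its tail. *)
Definition linear_code (F : fieldType) (s1 s2 : V) (c : E -> 'rV[F]_2) : Prop :=
  forall e : E,
    (tl e = s1 -> exists a : F, c e = a *: delta_mx 0 (0 : 'I_2)) /\
    (tl e = s2 -> exists a : F, c e = a *: delta_mx 0 (1 : 'I_2)) /\
    (tl e <> s1 -> tl e <> s2 ->
       exists beta : E -> F, c e = \sum_(e' | hd e' == tl e) beta e' *: c e').

(* terminal t recovers X1 + X2: the coding vector (1,1) is a linear combination
   of the coding vectors of the edges entering t. *)
Definition recovers_sum (F : fieldType) (c : E -> 'rV[F]_2) (t : V) : Prop :=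
  exists d : E -> F, \sum_(e | hd e == t) d e *: c e = const_mx 1.

End Network.

From HB Require Import structures.
From mathcomp Require Import all_boot all_order all_algebra all_field.
Set Implicit Arguments. Unset Strict Implicit.
Import GRing.Theory.
Local Open Scope ring_scope.

(* Let every edge e carry [X1] if only s1 reaches its tail, [X2] if only s2
   does, and [X1 + X2] if both do.  This is a linear code over any field: the
   vector of e is either already carried by one incoming edge of [tl e] (if
   some incoming edge is reached from both sources) or is the sum of the
   vectors of two incoming edges, one reached from each source.  A terminal is
   reached from both sources, so the same argument produces [X1 + X2] there. *)

Section Reachability.
Variables (V E : finType) (tl hd : E -> V).

Definition adjacent : rel V := fun u v => [exists e, (tl e == u) && (hd e == v)].

Lemma reachableP u v : reflect (reachable tl hd u v) (connect adjacent u v).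
Proof.
apply: (iffP connectP) => [[p pth ->] | [p]].
  elim: p u pth => [|w p IH] u /=; first by exists [::]; rewrite /= eqxx.
  case/andP=> /existsP[e /andP[/eqP eu /eqP ew]] /IH[q wq].
  by exists (e :: q); rewrite /= eu eqxx ew.
elim: p u => [|e p IH] u /=; first by move/eqP->; exists [::].
case/andP=> /eqP eu /IH[q pq ->]; exists (hd e :: q) => //=.
by rewrite pq andbT; apply/existsP; exists e; rewrite eu !eqxx.
Qed.

Lemma connect_in_edges u v : u != v ->
  connect adjacent u v = [exists e, (hd e == v) && connect adjacent u (tl e)].
Proof.
move=> uv; apply/idP/existsP => [|[e /andP[/eqP <- ue]]].
  case/connectP=> p; case/lastP: p => [|p w] /= => [_ vu|]; first by rewrite vu eqxx in uv.
  rewrite rcons_path last_rcons => /andP[pth /existsP[e /andP[/eqP te /eqP he]]] ->.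
  by exists e; rewrite he eqxx te; apply/connectP; exists p.
by apply: connect_trans ue (connect1 _); apply/existsP; exists e; rewrite !eqxx.
Qed.

Lemma connect_to_source u v : is_source hd v -> connect adjacent u v = (u == v).
Proof.
move=> srcv; apply/idP/eqP => [|->]; last exact: connect0.
have [//|uv] := eqVneq u v.
by rewrite connect_in_edges // => /existsP[e /andP[hev _]]; rewrite (negbTE (srcv e)) in hev.
Qed.

End Reachability.

Section OrSpan.
Variables (F : fieldType) (I : finType) (P : pred I).

Definition bool_row (x y : bool) : 'rV[F]_2 :=
  x%:R *: delta_mx 0 0 + y%:R *: delta_mx 0 1.

Definition pick_delta (Q : pred I) (k : I) : F :=
  if [pick i | Q i] is Some i then (k == i)%:R else 0.

Lemma sum_pick_delta (Q : pred I) (f : I -> 'rV[F]_2) (g : 'rV[F]_2) :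
  subpred Q P -> {in Q, forall i, f i = g} ->
  \sum_(k | P k) pick_delta Q k *: f k = [exists i, Q i]%:R *: g.
Proof.
rewrite /pick_delta; case: pickP => [i Qi|noQ] QP fg.
  have -> : [exists i, Q i] by apply/existsP; exists i.
  rewrite (bigD1 i) ?QP //= eqxx !scale1r fg // big1 ?addr0 // => k /andP[_ /negbTE->].
  by rewrite scale0r.
have -> : [exists i, Q i] = false by apply/existsP => -[i]; rewrite noQ.
by rewrite scale0r big1 // => k _; rewrite scale0r.
Qed.

Lemma bool_row_or_span (a b : I -> bool) :
  exists beta : I -> F, \sum_(i | P i) beta i *: bool_row (a i) (b i) =
    bool_row [exists i, P i && a i] [exists i, P i && b i].
Proof.
case: (pickP (fun i => [&& P i, a i & b i])) => [i /and3P[Pi ai bi]|noab].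
  exists (pick_delta (fun k => [&& P k, a k & b k])).
  rewrite (sum_pick_delta (g := bool_row true true)); first last.
  - by move=> k /and3P[_ -> ->].
  - by move=> k /andP[].
  have ex_i (Q : pred I) : Q i -> [exists k, Q k] by move=> Qi; apply/existsP; exists i.
  by rewrite !ex_i /= ?Pi ?ai ?bi // scale1r.
exists (fun k => pick_delta (fun k => P k && a k) k + pick_delta (fun k => P k && b k) k).
under eq_bigr do rewrite scalerDl.
rewrite big_split /= (sum_pick_delta (g := bool_row true false)); first last.
- move=> k /andP[Pk ak]; move: (noab k); rewrite /= Pk ak /= => -> //.
- by move=> k /andP[].
rewrite (sum_pick_delta (g := bool_row false true)); first last.
- move=> k /andP[Pk bk]; move: (noab k); rewrite /= Pk bk andbT /= => -> //.
- by move=> k /andP[].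
by rewrite /bool_row !scale1r !scale0r addr0 add0r.
Qed.

End OrSpan.

Section ReachabilityCode.
Variables (F : fieldType) (V E : finType) (tl hd : E -> V) (s1 s2 : V).
Hypotheses (s12 : s1 != s2) (src1 : is_source hd s1) (src2 : is_source hd s2).

Local Notation reach := (connect (adjacent tl hd)).

Definition reach_code (e : E) : 'rV[F]_2 := bool_row F (reach s1 (tl e)) (reach s2 (tl e)).

Lemma reach_code_span v : v != s1 -> v != s2 ->
  exists beta : E -> F,
    \sum_(e | hd e == v) beta e *: reach_code e = bool_row F (reach s1 v) (reach s2 v).
Proof.
move=> v1 v2; rewrite !(@connect_in_edges _ _ tl hd _ v) 1?eq_sym //.
exact: bool_row_or_span.
Qed.

Lemma reach_code_linear : linear_code tl hd s1 s2 reach_code.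
Proof.
move=> e; split; [|split] => [tle|tle|/eqP t1 /eqP t2].
- exists 1; rewrite /reach_code tle !connect_to_source // eqxx eq_sym (negbTE s12).
  by rewrite /bool_row !scale1r scale0r addr0.
- exists 1; rewrite /reach_code tle !connect_to_source // eqxx (negbTE s12).
  by rewrite /bool_row !scale1r scale0r add0r.
- by have [beta span] := reach_code_span t1 t2; exists beta; rewrite span.
Qed.

Lemma reach_code_recovers t :
  reachable tl hd s1 t -> reachable tl hd s2 t -> recovers_sum hd reach_code t.
Proof.
move=> /reachableP r1t /reachableP r2t.
have t1 : t != s1 by apply: contraTneq r2t => ->; rewrite connect_to_source // eq_sym.
have t2 : t != s2 by apply: contraTneq r1t => ->; rewrite connect_to_source.
have [beta span] := reach_code_span t1 t2.
exists beta; rewrite span r1t r2t.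
by apply/rowP => k; rewrite !mxE; case: k => -[|[|]] //= _; rewrite mulr1 mulr0 ?addr0 ?add0r.
Qed.

End ReachabilityCode.

Theorem theorem1
  (F : finFieldType) (hF : (2%N \in [pchar F]))
  (V E : finType) (tl hd : E -> V)
  (hacyc : acyclic tl hd)
  (s1 s2 : V) (hs12 : s1 != s2)
  (hsrc : forall v : V, is_source hd v <-> (v = s1 \/ v = s2))
  (n : nat) (t : 'I_n -> V)
  (hterm : forall j : 'I_n, is_sink tl (t j))
  (hconn : forall j : 'I_n, reachable tl hd s1 (t j) /\ reachable tl hd s2 (t j)) :
  exists c : E -> 'rV[F]_2,
    linear_code tl hd s1 s2 c /\ (forall j : 'I_n, recovers_sum hd c (t j)).
Proof.
have src1 : is_source hd s1 by apply/hsrc; left.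
have src2 : is_source hd s2 by apply/hsrc; right.
exists (reach_code F tl hd s1 s2); split; first exact: reach_code_linear.
by move=> j; have [r1 r2] := hconn j; apply: reach_code_recovers.
Qed.
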